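(* Let $\lambda>-1/2$, $\lambda\neq0$, let $M\ge0$, $a_0,\dots,a_M\in\mathbb{R}$ and $f_M(x)=\sum_{m=0}^M a_mC^{(\lambda)}_m(x)$. For integers $n\ge -1$ and $y\in[-1,1]$ let $\tilde R_n(y)=\int_{-1}^{y}f_M(y-1-t)\,C^{(\lambda)}_n(t)\,\mathrm{d}t$ (so $\tilde R_{-1}\equiv0$). Then $$\tilde R_0(y)=\int_{-1}^{y}f_M(t)\,\mathrm{d}t,$$ and for every integer $n\ge0$ and $y\in[-1,1]$, $$\tilde R_{n+1}(y)=2(n+\lambda)\int_{-1}^{y}\tilde R_n(s)\,\mathrm{d}s+\tilde R_{n-1}(y)+S^{(\lambda)}_n\int_{-1}^{y}f_M(t)\,\mathrm{d}t,$$ where $$S^{(\lambda)}_n=\frac{2(-1)^{n+1}(\lambda+n)(2\lambda-1)_n}{(n+1)!}.$$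
   Context: Gegenbauer polynomials $C^{(\lambda)}_n$ ($\lambda>-1/2$, $\lambda\ne0$) are defined by $C^{(\lambda)}_{-1}=0$, $C^{(\lambda)}_0=1$ and $2(n+\lambda)xC^{(\lambda)}_n(x)=(n+1)C^{(\lambda)}_{n+1}(x)+(n+2\lambda-1)C^{(\lambda)}_{n-1}(x)$ for $n\ge0$; $C^{(\lambda)}_n:=0$ for $n<0$. $(a)_n=a(a+1)\cdots(a+n-1)$ is the Pochhammer symbol, $(a)_0=1$. $\tilde R_n(y)$ is the convolution $\int_{-1}^{x+1}f_M(x-t)C^{(\lambda)}_n(t)\,\mathrm{d}t$ at $x=y-1$. *)

From Stdlib Require Import Reals ZArith.
From Coquelicot Require Import Coquelicot.
Open Scope R_scope.

(* geg2 lam n x = (C^(lam)_n(x), C^(lam)_{n-1}(x)), via the three-term recurrence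
   2(n+lam) x C_n = (n+1) C_{n+1} + (n+2lam-1) C_{n-1}, with C_{-1}=0, C_0=1. *)
Fixpoint geg2 (lam : R) (n : nat) (x : R) : R * R :=
  match n with
  | O => (1, 0)
  | S k => let (c, cp) := geg2 lam k x in
           ((2 * (INR k + lam) * x * c - (INR k + 2 * lam - 1) * cp) / (INR k + 1), c)
  end.

Definition gegen (lam : R) (n : nat) (x : R) : R := fst (geg2 lam n x).

Definition gegenZ (lam : R) (n : Z) (x : R) : R :=
  if (n <? 0)%Z then 0 else gegen lam (Z.to_nat n) x.

Fixpoint poch (a : R) (n : nat) : R :=
  match n with
  | O => 1
  | S k => poch a k * (a + INR k)
  end.

Definition fM (lam : R) (M : nat) (a : nat -> R) (x : R) : R :=
  sum_f_R0 (fun m => a m * gegen lam m x) M.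

Definition Rtilde (lam : R) (M : nat) (a : nat -> R) (n : Z) (y : R) : R :=
  RInt (fun t => fM lam M a (y - 1 - t) * gegenZ lam n t) (-1) y.

Definition Scoef (lam : R) (n : nat) : R :=
  2 * (-1) ^ (S n) * (lam + INR n) * poch (2 * lam - 1) n / INR (fact (S n)).

From Stdlib Require Import Reals ZArith Lra Lia.
From Coquelicot Require Import Coquelicot.
Open Scope R_scope.

(* Write [conv p g y] for the integral of [p (y - 1 - t) * g t] over [t] in [-1, y], so that
   [Rtilde n = conv fM C_n].  Differentiating the three-term recurrence gives
   C'_{n+1} - C'_{n-1} = 2 (n + lam) C_n, hence
   C_{n+1}(t) = 2 (n + lam) (int_{-1}^t C_n) + C_{n-1}(t) + S_n,
   where S_n = C_{n+1}(-1) - C_{n-1}(-1) follows from C_n(-1) = (-1)^n (2 lam)_n / n!.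
   Convolving with fM, which is linear in the second factor, it remains to see that
   [conv p 1 y = int_{-1}^y p] and [conv p (int_{-1}^. g) y = int_{-1}^y conv p g].
   Both follow from the commutativity of [conv]: the derivative of [y |-> conv G p y] is
   [conv g p y + G (-1) * p y], and [G (-1) = 0] for G the primitive of g vanishing at -1. *)

(* Coquelicot states its calculus rules over an abstract [AbsRing]; the specializations below
   are stated with [Rplus]/[Rmult], which [apply] does not unify with [plus]/[mult]. *)

Lemma is_derive_eq (f : R -> R) (x d d' : R) : is_derive f x d -> d = d' -> is_derive f x d'.
Proof. now intros H <-. Qed.

Lemma is_derive_Rmult (f g : R -> R) (x df dg : R) :
  is_derive f x df -> is_derive g x dg ->
  is_derive (fun t => f t * g t) x (df * g x + f x * dg).
Proof. intros Hf Hg. apply (is_derive_mult f g x df dg Hf Hg Rmult_comm). Qed.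

Lemma is_derive_Rplus (f g : R -> R) (x df dg : R) :
  is_derive f x df -> is_derive g x dg -> is_derive (fun t => f t + g t) x (df + dg).
Proof. exact (is_derive_plus f g x df dg). Qed.

Lemma is_derive_Rminus (f g : R -> R) (x df dg : R) :
  is_derive f x df -> is_derive g x dg -> is_derive (fun t => f t - g t) x (df - dg).
Proof. exact (is_derive_minus f g x df dg). Qed.

Lemma is_derive_Rconst (c x : R) : is_derive (fun _ => c) x 0.
Proof. exact (is_derive_const c x). Qed.

Lemma is_derive_Rid (x : R) : is_derive (fun t => t) x 1.
Proof. exact (is_derive_id x). Qed.

Lemma continuous_Rmult (f g : R -> R) (x : R) :
  continuous f x -> continuous g x -> continuous (fun t => f t * g t) x.
Proof. exact (continuous_mult f g x). Qed.

Lemma continuous_Rplus (f g : R -> R) (x : R) :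
  continuous f x -> continuous g x -> continuous (fun t => f t + g t) x.
Proof. exact (continuous_plus f g x). Qed.

Lemma continuous_Rminus (f g : R -> R) (x : R) :
  continuous f x -> continuous g x -> continuous (fun t => f t - g t) x.
Proof. exact (continuous_minus f g x). Qed.

Lemma continuous_Rconst (c x : R) : continuous (fun _ => c) x.
Proof. apply continuous_const. Qed.

Lemma continuous_reflect (f : R -> R) (c x : R) :
  (forall t, continuous f t) -> continuous (fun t => f (c - t)) x.
Proof.
  intros Hf. apply (continuous_comp (fun t => c - t) f); [|apply Hf].
  apply continuous_Rminus; [apply continuous_const | apply continuous_id].
Qed.

Lemma continuous_of_is_derive (f : R -> R) (x df : R) : is_derive f x df -> continuous f x.
Proof.
  intros H. apply (ex_derive_continuous (K := R_AbsRing) (V := R_NormedModule)).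
  exists df; exact H.
Qed.

Lemma ex_RInt_of_continuous (f : R -> R) (a b : R) : (forall t, continuous f t) -> ex_RInt f a b.
Proof. intros Hf. apply (ex_RInt_continuous (V := R_CompleteNormedModule)). intros; apply Hf. Qed.

Lemma RInt_of_is_derive (f df : R -> R) (a b : R) :
  (forall x, is_derive f x (df x)) -> (forall x, continuous df x) -> RInt df a b = f b - f a.
Proof.
  intros Hf Hdf. apply (is_RInt_unique (V := R_CompleteNormedModule)).
  apply (is_RInt_derive (V := R_CompleteNormedModule) f df); intros; auto.
Qed.

Lemma is_derive_RInt_upper (g : R -> R) (a x : R) :
  (forall t, continuous g t) -> is_derive (fun t => RInt g a t) x (g x).
Proof.
  intros Hg. apply (is_derive_RInt (V := R_NormedModule) g (fun t => RInt g a t) a x); [|apply Hg].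
  apply filter_forall. intros b.
  apply (RInt_correct (V := R_CompleteNormedModule)), ex_RInt_of_continuous, Hg.
Qed.

Lemma RInt_ext_R (f g : R -> R) (a b : R) : (forall t, f t = g t) -> RInt f a b = RInt g a b.
Proof. intros E. apply RInt_ext. intros t _. apply E. Qed.

Lemma RInt_Rplus (f g : R -> R) (a b : R) :
  (forall t, continuous f t) -> (forall t, continuous g t) ->
  RInt (fun t => f t + g t) a b = RInt f a b + RInt g a b.
Proof.
  intros Hf Hg.
  exact (RInt_plus (V := R_CompleteNormedModule) f g a b
           (ex_RInt_of_continuous f a b Hf) (ex_RInt_of_continuous g a b Hg)).
Qed.

Lemma RInt_Rscal (f : R -> R) (c a b : R) :
  (forall t, continuous f t) -> RInt (fun t => c * f t) a b = c * RInt f a b.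
Proof.
  intros Hf.
  exact (RInt_scal (V := R_CompleteNormedModule) f a b c (ex_RInt_of_continuous f a b Hf)).
Qed.

(** * Convolution on [-1, y] *)

Definition conv (p g : R -> R) (y : R) : R := RInt (fun t => p (y - 1 - t) * g t) (-1) y.

Lemma continuous_conv_integrand (p g : R -> R) (y t : R) :
  (forall t, continuous p t) -> (forall t, continuous g t) ->
  continuous (fun t => p (y - 1 - t) * g t) t.
Proof. intros Hp Hg. apply continuous_Rmult; [apply continuous_reflect, Hp | apply Hg]. Qed.

Lemma conv_ext (p g h : R -> R) (y : R) : (forall t, g t = h t) -> conv p g y = conv p h y.
Proof. intros E. apply RInt_ext_R. intros t. now rewrite E. Qed.

Lemma conv_comm (p g : R -> R) (y : R) :
  (forall t, continuous p t) -> (forall t, continuous g t) -> conv p g y = conv g p y.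
Proof.
  intros Hp Hg. unfold conv.
  set (F := fun t => p (y - 1 - t) * g t).
  assert (HF : forall t, continuous F t) by (intros; apply continuous_conv_integrand; auto).
  assert (E := RInt_comp_lin (V := R_CompleteNormedModule) F (-1) (y - 1) (-1) y).
  replace (-1 * -1 + (y - 1)) with y in E by ring.
  replace (-1 * y + (y - 1)) with (-1) in E by ring.
  specialize (E (ex_RInt_of_continuous F y (-1) HF)).
  rewrite <- (opp_RInt_swap (V := R_CompleteNormedModule) F (-1) y) in E
    by (apply ex_RInt_of_continuous, HF).
  change (RInt (fun t => -1 * F (-1 * t + (y - 1))) (-1) y = - RInt F (-1) y) in E.
  rewrite RInt_Rscal in E.
  2:{ intros t. apply (continuous_comp (fun t => -1 * t + (y - 1)) F); [|apply HF].
      apply continuous_Rplus; [|apply continuous_Rconst].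
      apply continuous_Rmult; [apply continuous_Rconst | apply continuous_id]. }
  rewrite (RInt_ext_R _ (fun t => g (y - 1 - t) * p t)) in E.
  2:{ intros t. unfold F. replace (y - 1 - (-1 * t + (y - 1))) with t by ring.
      replace (-1 * t + (y - 1)) with (y - 1 - t) by ring. ring. }
  unfold F in E |- *. lra.
Qed.

Lemma conv_one_r (p : R -> R) (y : R) :
  (forall t, continuous p t) -> conv p (fun _ => 1) y = RInt p (-1) y.
Proof.
  intros Hp. rewrite conv_comm by (auto using continuous_Rconst).
  apply RInt_ext_R. intros t. ring.
Qed.

Lemma conv_plus_r (p g h : R -> R) (y : R) :
  (forall t, continuous p t) -> (forall t, continuous g t) -> (forall t, continuous h t) ->
  conv p (fun t => g t + h t) y = conv p g y + conv p h y.
Proof.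
  intros Hp Hg Hh. unfold conv. rewrite <- RInt_Rplus
    by (intros; apply continuous_conv_integrand; auto).
  apply RInt_ext_R. intros t. ring.
Qed.

Lemma conv_scal_r (p g : R -> R) (c y : R) :
  (forall t, continuous p t) -> (forall t, continuous g t) ->
  conv p (fun t => c * g t) y = c * conv p g y.
Proof.
  intros Hp Hg. unfold conv. rewrite <- RInt_Rscal
    by (intros; apply continuous_conv_integrand; auto).
  apply RInt_ext_R. intros t. ring.
Qed.

Lemma conv_affine_r (p g h : R -> R) (c d y : R) :
  (forall t, continuous p t) -> (forall t, continuous g t) -> (forall t, continuous h t) ->
  conv p (fun t => c * g t + h t + d) y = c * conv p g y + conv p h y + d * RInt p (-1) y.
Proof.
  intros Hp Hg Hh.
  assert (Hcg : forall t, continuous (fun t => c * g t) t)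
    by (intros; apply continuous_Rmult; [apply continuous_Rconst | apply Hg]).
  rewrite (conv_plus_r p (fun t => c * g t + h t) (fun _ => d)),
    (conv_plus_r p (fun t => c * g t) h), conv_scal_r,
    (conv_ext p (fun _ => d) (fun _ => d * 1)), (conv_scal_r p (fun _ => 1)), conv_one_r;
    auto using continuous_Rconst.
  - intros t. ring.
  - intros t. apply continuous_Rplus; [apply Hcg | apply Hh].
Qed.

Lemma continuity_2d_pt_reflect_mult (h g : R -> R) (u t : R) :
  (forall x, continuous h x) -> (forall x, continuous g x) ->
  continuity_2d_pt (fun u v => h (u - 1 - v) * g v) u t.
Proof.
  intros Hh Hg. apply continuity_2d_pt_mult.
  - apply (continuity_1d_2d_pt_comp h (fun u v => u - 1 - v)).
    + apply continuity_pt_filterlim, Hh.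
    + apply continuity_2d_pt_minus; [apply continuity_2d_pt_minus|].
      * apply continuity_2d_pt_id1.
      * apply continuity_2d_pt_const.
      * apply continuity_2d_pt_id2.
  - apply (continuity_1d_2d_pt_comp g (fun u v => v)).
    + apply continuity_pt_filterlim, Hg.
    + apply continuity_2d_pt_id2.
Qed.

Lemma is_derive_conv (p dp g : R -> R) (y : R) :
  (forall x, is_derive p x (dp x)) -> (forall x, continuous dp x) -> (forall x, continuous g x) ->
  is_derive (conv p g) y (conv dp g y + p (-1) * g y).
Proof.
  intros Hp Hdp Hg.
  assert (Hpc : forall x, continuous p x)
    by (intros x; exact (continuous_of_is_derive p x _ (Hp x))).
  set (f := fun u t => p (u - 1 - t) * g t).
  assert (Hf_ex : forall u a b, ex_RInt (f u) a b).
  { intros u a b. apply ex_RInt_of_continuous. intros t. apply continuous_conv_integrand; auto. }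
  assert (Hf_der : forall u t, is_derive (fun z => f z t) u (dp (u - 1 - t) * g t)).
  { intros u t. unfold f.
    replace (dp (u - 1 - t) * g t) with (1 * dp (u - 1 - t) * g t + p (u - 1 - t) * 0) by ring.
    apply (is_derive_Rmult (fun z => p (z - 1 - t)) (fun _ => g t)); [|apply is_derive_Rconst].
    apply (is_derive_comp p (fun z => z - 1 - t)); [apply Hp|].
    auto_derive; [exact I | ring]. }
  assert (Hf_der_eq : forall u t, Derive (fun z => f z t) u = dp (u - 1 - t) * g t)
    by (intros; apply is_derive_unique, Hf_der).
  assert (Hf_der_cont : forall u t, continuity_2d_pt (fun u v => Derive (fun z => f z v) u) u t).
  { intros u t. eapply continuity_2d_pt_ext; [intros; symmetry; apply Hf_der_eq|].
    now apply continuity_2d_pt_reflect_mult. }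
  assert (E := is_derive_RInt_param_bound_comp_aux3 f (-1) (fun u => u) y 1).
  unfold conv. replace (RInt (fun t => dp (y - 1 - t) * g t) (-1) y + p (-1) * g y)
    with (RInt (fun t => Derive (fun u => f u t) y) (-1) y + f y y * 1).
  - apply E.
    + apply filter_forall. intros; apply Hf_ex.
    + exists (mkposreal 1 Rlt_0_1). apply filter_forall. intros; apply Hf_ex.
    + apply is_derive_Rid.
    + exists (mkposreal 1 Rlt_0_1). apply filter_forall. intros x t _.
      exists (dp (x - 1 - t) * g t). apply Hf_der.
    + intros; apply Hf_der_cont.
    + exists (mkposreal 1 Rlt_0_1). intros; apply Hf_der_cont.
    + apply continuity_pt_filterlim. apply continuous_conv_integrand; auto.
  - unfold f. rewrite (RInt_ext_R _ _ _ _ (Hf_der_eq y)).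
    replace (y - 1 - y) with (-1) by ring. ring.
Qed.

(* [p] is assumed C^1 only to obtain the continuity of [conv p g] from [is_derive_conv]. *)
Lemma conv_primitive_r (p dp g : R -> R) (y : R) :
  (forall x, is_derive p x (dp x)) -> (forall x, continuous dp x) -> (forall x, continuous g x) ->
  conv p (fun t => RInt g (-1) t) y = RInt (conv p g) (-1) y.
Proof.
  intros Hp Hdp Hg.
  set (G := fun t => RInt g (-1) t).
  assert (HG : forall x, is_derive G x (g x)) by (intros; apply is_derive_RInt_upper, Hg).
  assert (HGc : forall x, continuous G x)
    by (intros x; exact (continuous_of_is_derive G x _ (HG x))).
  assert (Hpc : forall x, continuous p x)
    by (intros x; exact (continuous_of_is_derive p x _ (Hp x))).
  assert (HG0 : G (-1) = 0) by exact (RInt_point (-1) g).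
  rewrite conv_comm by auto.
  rewrite (RInt_of_is_derive (conv G p) (conv p g)).
  - assert (Hconv0 : conv G p (-1) = 0) by exact (RInt_point (-1) _).
    rewrite Hconv0. ring.
  - intros x. replace (conv p g x) with (conv g p x + G (-1) * p x).
    + apply is_derive_conv; auto.
    + rewrite HG0, conv_comm by auto. ring.
  - intros x. exact (continuous_of_is_derive _ x _ (is_derive_conv p dp g x Hp Hdp Hg)).
Qed.

(** * Gegenbauer polynomials *)

Lemma geg2_succ (lam : R) (k : nat) (x : R) : geg2 lam (S k) x =
  ((2 * (INR k + lam) * x * fst (geg2 lam k x) - (INR k + 2 * lam - 1) * snd (geg2 lam k x))
     / (INR k + 1),
   fst (geg2 lam k x)).
Proof. simpl. now destruct (geg2 lam k x). Qed.

Fixpoint dgeg2 (lam : R) (n : nat) (x : R) : R * R :=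
  match n with
  | O => (0, 0)
  | S k => ((2 * (INR k + lam) * fst (geg2 lam k x) + 2 * (INR k + lam) * x * fst (dgeg2 lam k x)
             - (INR k + 2 * lam - 1) * snd (dgeg2 lam k x)) / (INR k + 1),
            fst (dgeg2 lam k x))
  end.

Lemma INR_succ_neq0 (k : nat) : INR k + 1 <> 0.
Proof. pose proof (pos_INR k); lra. Qed.

Lemma is_derive_geg2 (lam : R) (n : nat) (x : R) :
  is_derive (fun x => fst (geg2 lam n x)) x (fst (dgeg2 lam n x)) /\
  is_derive (fun x => snd (geg2 lam n x)) x (snd (dgeg2 lam n x)).
Proof.
  induction n as [|k [IHfst IHsnd]].
  - simpl. split; apply is_derive_Rconst.
  - split; eapply is_derive_ext; try (intro t; rewrite geg2_succ; reflexivity); [|exact IHfst].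
    simpl fst. unfold Rdiv. eapply is_derive_eq.
    + apply is_derive_Rmult; [|apply is_derive_Rconst].
      apply is_derive_Rminus; apply is_derive_Rmult;
        [| apply IHfst | apply is_derive_Rconst | apply IHsnd].
      apply is_derive_Rmult; [apply is_derive_Rconst | apply is_derive_Rid].
    + simpl. ring.
Qed.

Lemma continuous_geg2 (lam : R) (n : nat) (x : R) :
  continuous (fun x => fst (geg2 lam n x)) x /\ continuous (fun x => snd (geg2 lam n x)) x.
Proof.
  destruct (is_derive_geg2 lam n x) as [Hfst Hsnd].
  split; eapply continuous_of_is_derive; eassumption.
Qed.

Lemma continuous_dgeg2 (lam : R) (n : nat) (x : R) :
  continuous (fun x => fst (dgeg2 lam n x)) x /\ continuous (fun x => snd (dgeg2 lam n x)) x.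
Proof.
  induction n as [|k [IHfst IHsnd]].
  - simpl. split; apply continuous_Rconst.
  - split; [|exact IHfst]. simpl. unfold Rdiv.
    apply continuous_Rmult; [|apply continuous_Rconst].
    apply continuous_Rminus; [apply continuous_Rplus|].
    + apply continuous_Rmult; [apply continuous_Rconst | apply continuous_geg2].
    + apply continuous_Rmult; [|exact IHfst].
      apply continuous_Rmult; [apply continuous_Rconst | apply continuous_id].
    + apply continuous_Rmult; [apply continuous_Rconst | exact IHsnd].
Qed.

Lemma dgeg2_succ_fst (lam : R) (k : nat) (x : R) :
  x * fst (dgeg2 lam k x) - snd (dgeg2 lam k x) = INR k * fst (geg2 lam k x) ->
  fst (dgeg2 lam (S k) x) = 2 * (INR k + lam) * fst (geg2 lam k x) + snd (dgeg2 lam k x).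
Proof.
  intros E. simpl fst at 1.
  replace (2 * (INR k + lam) * x * fst (dgeg2 lam k x))
    with (2 * (INR k + lam) * (snd (dgeg2 lam k x) + INR k * fst (geg2 lam k x))) by nra.
  field. apply INR_succ_neq0.
Qed.

Lemma dgeg2_identities (lam : R) (n : nat) (x : R) :
  x * fst (dgeg2 lam n x) - snd (dgeg2 lam n x) = INR n * fst (geg2 lam n x) /\
  fst (dgeg2 lam n x) - x * snd (dgeg2 lam n x) = (INR n - 1 + 2 * lam) * snd (geg2 lam n x).
Proof.
  induction n as [|k [IH1 IH2]].
  - simpl. split; ring.
  - rewrite (dgeg2_succ_fst lam k x IH1), geg2_succ, S_INR. simpl snd. simpl fst.
    assert (E2 : fst (dgeg2 lam k x)
                 = x * snd (dgeg2 lam k x) + (INR k - 1 + 2 * lam) * snd (geg2 lam k x)) by lra.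
    rewrite E2 in IH1 |- *. split.
    + field. apply INR_succ_neq0.
    + lra.
Qed.

Lemma dgeg2_succ_sub (lam : R) (n : nat) (x : R) :
  fst (dgeg2 lam (S n) x) - snd (dgeg2 lam n x) = 2 * (INR n + lam) * gegen lam n x.
Proof.
  rewrite (dgeg2_succ_fst lam n x (proj1 (dgeg2_identities lam n x))). unfold gegen. ring.
Qed.

Lemma snd_geg2_succ (lam : R) (k : nat) (x : R) : snd (geg2 lam (S k) x) = gegen lam k x.
Proof. now rewrite geg2_succ. Qed.

Lemma gegen_succ (lam : R) (k : nat) (x : R) : gegen lam (S (S k)) x =
  (2 * (INR (S k) + lam) * x * gegen lam (S k) x - (INR (S k) + 2 * lam - 1) * gegen lam k x)
    / (INR (S k) + 1).
Proof. unfold gegen at 1. now rewrite geg2_succ, snd_geg2_succ. Qed.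

Lemma poch_succ_l (a : R) (m : nat) : poch a (S m) = a * poch (a + 1) m.
Proof.
  induction m as [|m IH].
  - simpl. ring.
  - change (poch a (S (S m))) with (poch a (S m) * (a + INR (S m))).
    rewrite IH. simpl poch. rewrite S_INR. ring.
Qed.

Lemma INR_fact_neq0 (m : nat) : INR (fact m) <> 0.
Proof. apply not_0_INR, fact_neq_0. Qed.

Lemma gegen_at_m1 (lam : R) (n : nat) :
  gegen lam n (-1) = (-1) ^ n * poch (2 * lam) n / INR (fact n).
Proof.
  enough (H : forall n, gegen lam n (-1) = (-1) ^ n * poch (2 * lam) n / INR (fact n) /\
                        gegen lam (S n) (-1) = (-1) ^ S n * poch (2 * lam) (S n) / INR (fact (S n)))
    by apply H.
  intros m. induction m as [|m [IH0 IH1]].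
  - unfold gegen. simpl. split; field.
  - split; [exact IH1|]. rewrite gegen_succ, IH0, IH1.
    rewrite !fact_simpl, !mult_INR. cbn [poch pow]. rewrite !S_INR.
    pose proof (INR_fact_neq0 m). pose proof (pos_INR m).
    field. repeat split; lra.
Qed.

Lemma gegen_succ_sub_pred_at_m1 (lam : R) (n : nat) :
  gegen lam (S n) (-1) - snd (geg2 lam n (-1)) = Scoef lam n.
Proof.
  unfold Scoef. destruct n as [|m].
  - rewrite gegen_at_m1. simpl. field.
  - rewrite snd_geg2_succ, !gegen_at_m1, (poch_succ_l (2 * lam - 1) m).
    replace (2 * lam - 1 + 1) with (2 * lam) by ring.
    rewrite !fact_simpl, !mult_INR. cbn [poch pow]. rewrite !S_INR.
    pose proof (INR_fact_neq0 m). pose proof (pos_INR m).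
    field. repeat split; lra.
Qed.

Lemma gegen_succ_integral (lam : R) (n : nat) (t : R) :
  gegen lam (S n) t =
  2 * (INR n + lam) * RInt (gegen lam n) (-1) t + snd (geg2 lam n t) + Scoef lam n.
Proof.
  rewrite <- RInt_Rscal by (intros; apply continuous_geg2).
  rewrite (RInt_of_is_derive (fun t => gegen lam (S n) t - snd (geg2 lam n t))).
  - rewrite <- gegen_succ_sub_pred_at_m1. lra.
  - intros x. eapply is_derive_eq.
    + apply is_derive_Rminus;
        [apply (proj1 (is_derive_geg2 lam (S n) x)) | apply (proj2 (is_derive_geg2 lam n x))].
    + apply dgeg2_succ_sub.
  - intros x. apply continuous_Rmult;
      [apply continuous_Rconst | apply (proj1 (continuous_geg2 lam n x))].
Qed.

Lemma gegenZ_of_nat (lam : R) (n : nat) (t : R) : gegenZ lam (Z.of_nat n) t = gegen lam n t.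
Proof.
  unfold gegenZ. replace (Z.of_nat n <? 0)%Z with false by (symmetry; apply Z.ltb_ge; lia).
  now rewrite Nat2Z.id.
Qed.

Lemma gegenZ_succ (lam : R) (n : nat) (t : R) : gegenZ lam (Z.of_nat n + 1) t = gegen lam (S n) t.
Proof. rewrite <- gegenZ_of_nat. f_equal. lia. Qed.

Lemma gegenZ_pred (lam : R) (n : nat) (t : R) : gegenZ lam (Z.of_nat n - 1) t = snd (geg2 lam n t).
Proof.
  destruct n as [|m]; [reflexivity|].
  rewrite snd_geg2_succ, <- gegenZ_of_nat. f_equal. lia.
Qed.

Definition dfM (lam : R) (M : nat) (a : nat -> R) (x : R) : R :=
  sum_f_R0 (fun m => a m * fst (dgeg2 lam m x)) M.

Lemma is_derive_fM (lam : R) (M : nat) (a : nat -> R) (x : R) :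
  is_derive (fM lam M a) x (dfM lam M a x).
Proof.
  unfold fM, dfM. induction M as [|M IH]; cbn [sum_f_R0].
  - eapply is_derive_eq.
    + apply is_derive_Rmult; [apply is_derive_Rconst | apply (proj1 (is_derive_geg2 lam _ x))].
    + simpl. ring.
  - eapply is_derive_eq.
    + apply is_derive_Rplus; [apply IH|].
      apply is_derive_Rmult; [apply is_derive_Rconst | apply (proj1 (is_derive_geg2 lam _ x))].
    + cbv beta. ring.
Qed.

Lemma continuous_dfM (lam : R) (M : nat) (a : nat -> R) (x : R) : continuous (dfM lam M a) x.
Proof.
  unfold dfM. induction M as [|M IH]; cbn [sum_f_R0].
  - apply continuous_Rmult; [apply continuous_Rconst | apply (proj1 (continuous_dgeg2 lam _ x))].
  - apply continuous_Rplus; [apply IH|].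
    apply continuous_Rmult; [apply continuous_Rconst | apply (proj1 (continuous_dgeg2 lam _ x))].
Qed.

Lemma Rtilde_conv (lam : R) (M : nat) (a : nat -> R) (n : Z) :
  Rtilde lam M a n = conv (fM lam M a) (gegenZ lam n).
Proof. reflexivity. Qed.

Theorem theorem4p2 (lam : R) (M : nat) (a : nat -> R) :
  -1/2 < lam -> lam <> 0 ->
  (forall y : R, -1 <= y <= 1 ->
     Rtilde lam M a 0%Z y = RInt (fun t => fM lam M a t) (-1) y) /\
  (forall (n : nat) (y : R), -1 <= y <= 1 ->
     Rtilde lam M a (Z.of_nat n + 1)%Z y =
       2 * (INR n + lam) * RInt (fun s => Rtilde lam M a (Z.of_nat n) s) (-1) y
       + Rtilde lam M a (Z.of_nat n - 1)%Z y
       + Scoef lam n * RInt (fun t => fM lam M a t) (-1) y).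
Proof.
  (* The recurrence only divides by [INR k + 1] > 0, so the identities hold for every real [lam]. *)
  intros _ _.
  set (p := fM lam M a).
  assert (Hp : forall x, is_derive p x (dfM lam M a x)) by apply is_derive_fM.
  assert (Hpc : forall x, continuous p x)
    by (intros x; exact (continuous_of_is_derive p x _ (Hp x))).
  split.
  - intros y _. rewrite Rtilde_conv, (conv_ext p _ (fun _ => 1)) by reflexivity.
    now apply conv_one_r.
  - intros n y _. rewrite !Rtilde_conv. fold p.
    assert (Hgc : forall x, continuous (gegen lam n) x) by (intros; apply continuous_geg2).
    rewrite (conv_ext p _ (fun t => 2 * (INR n + lam) * RInt (gegen lam n) (-1) t
                                     + snd (geg2 lam n t) + Scoef lam n))
      by (intros t; rewrite gegenZ_succ; apply gegen_succ_integral).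
    rewrite conv_affine_r, (conv_primitive_r p (dfM lam M a)); auto using continuous_dfM.
    - rewrite (conv_ext p (gegenZ lam (Z.of_nat n - 1)) _ y (gegenZ_pred lam n)).
      rewrite (RInt_ext_R (conv p (gegenZ lam (Z.of_nat n))) (conv p (gegen lam n)))
        by (intros; apply conv_ext, gegenZ_of_nat).
      reflexivity.
    - intros t. exact (continuous_of_is_derive _ t _ (is_derive_RInt_upper _ _ t Hgc)).
    - intros t. apply continuous_geg2.
Qed.
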